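(* Let $F$ be a positive integer, $S\in\mathrm{Sat}(F)$, and $x\in\mathrm{SG}(S)$ with $x<\mathrm{m}(S)$ and $x\neq F$. Then $S\cup\{x\}\in\mathrm{Sat}(F)$ if and only if $s+\mathrm{d}_{S\cup\{x\}}(s)\in S$ for every $s\in S$ with $\mathrm{m}(S)\le s\le \mathrm{m}(S)+x$.
   Context: A numerical semigroup is a subset $S\subseteq\mathbb{N}$ closed under addition, containing $0$, with $\mathbb{N}\setminus S$ finite. Its Frobenius number $\mathrm{F}(S)$ is the largest integer not in $S$, and its multiplicity $\mathrm{m}(S)$ is $\min(S\setminus\{0\})$. For $A\subseteq\mathbb{N}$ and $a\in A$, let $\mathrm{d}_A(a)=\gcd\{x\in A\mid x\le a\}$. A numerical semigroup $S$ is saturated if $s+\mathrm{d}_S(s)\in S$ for all $s\in S\setminus\{0\}$. For a positive integer $F$, $\mathrm{Sat}(F)$ denotes the set of all saturated numerical semigroups $S$ with $\mathrm{F}(S)=F$. An integer $z$ is a pseudo-Frobenius number of $S$ if $z\notin S$ and $z+s\in S$ for all $s\in S\setminus\{0\}$; $\mathrm{PF}(S)$ is the set of these, and $\mathrm{SG}(S)=\{x\in\mathrm{PF}(S)\mid 2x\in S\}$. *)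

From mathcomp Require Import all_boot.
Set Implicit Arguments. Unset Strict Implicit. Unset Printing Implicit Defensive.

Definition numerical_semigroup (S : pred nat) : Prop :=
  [/\ S 0, (forall a b, S a -> S b -> S (a + b)) & exists N, forall n, N <= n -> S n].

Definition is_frobenius (S : pred nat) (F : nat) : Prop :=
  ~~ S F /\ forall n, F < n -> S n.

Definition is_multiplicity (S : pred nat) (m : nat) : Prop :=
  [/\ 0 < m, S m & forall s, 0 < s -> S s -> m <= s].

Definition dA (A : pred nat) (a : nat) : nat :=
  \big[gcdn/0]_(0 <= y < a.+1 | A y) y.

Definition saturated (S : pred nat) : Prop :=
  forall s, S s -> 0 < s -> S (s + dA S s).

Definition inSat (F : nat) (S : pred nat) : Prop :=
  [/\ numerical_semigroup S, saturated S & is_frobenius S F].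

Definition pseudo_frobenius (S : pred nat) (z : nat) : Prop :=
  ~~ S z /\ forall s, S s -> 0 < s -> S (z + s).

Definition inSG (S : pred nat) (x : nat) : Prop :=
  pseudo_frobenius S x /\ S (2 * x).

Definition addelt (S : pred nat) (x : nat) : pred nat :=
  fun n => (n == x) || S n.

From mathcomp Require Import all_boot.

(* Write T = S ∪ {x}.  Because x is pseudo-Frobenius and 2x ∈ S, T is again a
   numerical semigroup, and since x ≠ F its Frobenius number is still F.  So
   only saturation of T matters, and we study d_T with the gcd characterisation
   of d_A:
   - d_T(x) = x, since every nonzero element of S exceeds x;
   - d_T(t) = d_S(t) for t ≥ m + x, since m, m + x ∈ S ∩ [0, t] already force
     every common divisor to divide x.
   So saturation of T at x follows from 2x ∈ S, beyond m + x it follows from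
   saturation of S, and on the window [m, m + x] it is exactly the hypothesis.
   Conversely, for s ≥ m the element s + d_T(s) ∈ T exceeds x, so it lies in S. *)

Lemma dA_dvd (A : pred nat) (a y : nat) : A y -> y <= a -> dA A a %| y.
Proof.
move=> Ay ya; rewrite /dA big_mkcond (bigD1_seq y) ?iota_uniq ?mem_index_iota //=.
by rewrite Ay dvdn_gcdl.
Qed.

Lemma dA_greatest (A : pred nat) (a k : nat) :
  (forall y, y <= a -> A y -> k %| y) -> k %| dA A a.
Proof.
move=> kall; rewrite /dA big_seq_cond; apply: (big_ind (dvdn k)) => //.
  by move=> u v ku kv; rewrite dvdn_gcd ku kv.
by move=> y /andP [ya Ay]; apply: kall => //; move: ya; rewrite mem_index_iota.
Qed.

Lemma addelt_numerical_semigroup (S : pred nat) (x : nat) :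
  numerical_semigroup S -> inSG S x -> numerical_semigroup (addelt S x).
Proof.
move=> [S0 Sadd [N SN]] [[_ xS] S2x].
split; first by rewrite /addelt S0 orbT.
  rewrite /addelt => a b /orP [/eqP ->|Sa] /orP [/eqP ->|Sb].
  - by rewrite addnn -mul2n S2x orbT.
  - by case: b Sb => [|b] Sb; rewrite ?addn0 ?eqxx // xS ?orbT.
  - by case: a Sa => [|a] Sa; rewrite ?add0n ?eqxx // addnC xS ?orbT.
  - by rewrite Sadd ?orbT.
by exists N => n /SN Sn; rewrite /addelt Sn orbT.
Qed.

Lemma addelt_frobenius (S : pred nat) (F x : nat) :
  is_frobenius S F -> x <> F -> is_frobenius (addelt S x) F.
Proof.
move=> [SF SFn] xF; split; last by move=> n /SFn Sn; rewrite /addelt Sn orbT.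
by rewrite /addelt negb_or SF andbT; apply/eqP => e; apply: xF.
Qed.

Section AdjoinSmallGap.

Variables (S : pred nat) (m x : nat).
Hypothesis mult : is_multiplicity S m.
Hypothesis x_lt_m : x < m.

(* Below the multiplicity, x is the only nonzero element of S ∪ {x}. *)
Lemma dA_addelt_at_gap : dA (addelt S x) x = x.
Proof.
have [_ _ mmin] := mult.
have Tx : addelt S x x by rewrite /addelt eqxx.
apply/eqP; rewrite eqn_dvd dA_dvd //=.
apply: dA_greatest => -[|y] yx /orP [/eqP ->|Sy]; rewrite ?dvdn0 //.
by have := mmin y.+1 isT Sy; rewrite leqNgt (leq_ltn_trans yx x_lt_m).
Qed.

(* Beyond m + x, adjoining x does not change d: m and m + x already lie in S
   below t, and any common divisor of them divides x. *)
Lemma dA_addelt_far (t : nat) :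
  S (m + x) -> m + x <= t -> dA (addelt S x) t = dA S t.
Proof.
have [_ Sm _] := mult; move=> Smx mxt.
apply/eqP; rewrite eqn_dvd; apply/andP; split.
  by apply: dA_greatest => y yt Sy; apply: dA_dvd => //; rewrite /addelt Sy orbT.
apply: dA_greatest => y yt /orP [/eqP ->|Sy]; last exact: dA_dvd.
rewrite -(dvdn_addr x (@dA_dvd S _ _ Sm (leq_trans (leq_addr x m) mxt))).
exact: dA_dvd.
Qed.

Lemma addelt_saturated :
  saturated S -> inSG S x ->
  (forall s, S s -> m <= s <= m + x -> S (s + dA (addelt S x) s)) ->
  saturated (addelt S x).
Proof.
have [m0 Sm mmin] := mult.
move=> Ssat [[_ xS] S2x] window t /orP [/eqP ->|St] t0; apply/orP; right.
  by rewrite dA_addelt_at_gap addnn -mul2n.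
have mt := mmin _ t0 St.
have [tmx|mxt] := leqP t (m + x); first by apply: window; rewrite ?mt.
have Smx : S (m + x) by rewrite addnC; apply: xS.
by rewrite dA_addelt_far ?(ltnW mxt) // Ssat.
Qed.

(* Conversely, if S ∪ {x} is saturated then the window condition holds: for
   s >= m the element s + d(s) exceeds x, so it lies in S. *)
Lemma saturated_addelt_window :
  saturated (addelt S x) ->
  forall s, S s -> m <= s <= m + x -> S (s + dA (addelt S x) s).
Proof.
have [m0 _ _] := mult.
move=> Tsat s Ss /andP [ms _].
have Ts : addelt S x s by rewrite /addelt Ss orbT.
have /orP [/eqP e|] // := Tsat s Ts (leq_trans m0 ms).
by move: x_lt_m; rewrite -e ltnNge (leq_trans ms (leq_addr _ _)).
Qed.

End AdjoinSmallGap.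

Theorem proposition19 (F : nat) (S : pred nat) (x m : nat) :
  0 < F -> inSat F S -> is_multiplicity S m ->
  inSG S x -> x < m -> x <> F ->
  (inSat F (addelt S x) <->
   (forall s, S s -> m <= s <= m + x -> S (s + dA (addelt S x) s))).
Proof.
move=> _ [Snum Ssat Sfrob] mult SGx xm xF; split.
  by move=> [_ Tsat _]; apply: saturated_addelt_window.
move=> window; split.
- exact: addelt_numerical_semigroup Snum SGx.
- exact: addelt_saturated mult xm Ssat SGx window.
- exact: addelt_frobenius Sfrob xF.
Qed.
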